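(* Let $\mathfrak{C}=(U,M,I,N,J)$ be a formal decision context. Then the set of necessary I-decision rules of $\mathfrak{C}$ is $$\overline{\mathfrak{R}}_{I}(\mathfrak{C})=\{(\cup [O]_{R_1},(\cup [O]_{R_1})^{\square_M})\rightarrow(O^{\uparrow_N\downarrow_N},O^{\uparrow_N})\mid O\in \mathrm{Ext}L_O(\mathfrak{C}_M),\ O\neq\emptyset,\ O^{\uparrow_N\downarrow_N}\neq U\}.$$
   Context: Formal context $(U,M,I)$: $U$ and $M$ are finite nonempty sets and $I\subseteq U\times M$. For $O\subseteq U$ and $C\subseteq M$ define: - $O^{\uparrow}=\{a\in M\mid \forall x\in O\,((x,a)\in I)\}$ and $C^{\downarrow}=\{x\in U\mid \forall a\in C\,((x,a)\in I)\}$; - $O^{\square}=\{a\in M\mid \forall x\in U\,((x,a)\in I\Rightarrow x\in O)\}$ and $C^{\lozenge}=\{x\in U\mid \exists a\in C\,((x,a)\in I)\}$. A formal concept is a pair $(O,C)$ with $O^\uparrow=C$ and $C^\downarrow=O$ (set $L$). An object-oriented concept is a pair $(O,C)$ with $O^\square=C$ and $C^\lozenge=O$ (set $L_O$). $\mathrm{Ext}$ denotes the set of extents (first components). Standing assumption: contexts are canonical, i.e. for all $x\in U$ and $a\in M$ we have $\{x\}^\uparrow\notin\{\emptyset,M\}$ and $\{a\}^\downarrow\notin\{\emptyset,U\}$. A formal decision context $\mathfrak{C}=(U,M,I,N,J)$ has conditional context $\mathfrak{C}_M=(U,M,I)$ and decision context $\mathfrak{C}_N=(U,N,J)$, with $M\cap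 N=\emptyset$. Operators carry the subscript $M$ or $N$ according to the context in which they are computed. An I-decision rule is $(O,C)\rightarrow(Y,D)$ with $(O,C)\in L_O(\mathfrak{C}_M)$, $(Y,D)\in L(\mathfrak{C}_N)$, $O\subseteq Y$, $O\ne\emptyset$ and $Y\ne U$; the set of these is $\mathfrak{R}_I(\mathfrak{C})$. Implication: $(O_1,C_1)\rightarrow(Y_1,D_1)\Rightarrow(O_2,C_2)\rightarrow(Y_2,D_2)$ iff $O_2\subseteq O_1\subseteq Y_1\subseteq Y_2$. A rule $r$ is necessary if there is no $r_1\in\mathfrak{R}_I(\mathfrak{C})$ with $r_1\neq r$ and $r_1\Rightarrow r$. $R_1$ is the equivalence relation on $\mathrm{Ext}L_O(\mathfrak{C}_M)$ given by $(O,Y)\in R_1$ iff $O^{\uparrow_N}=Y^{\uparrow_N}$. $[O]_{R_1}$ is the class of $O$, and $\cup[O]_{R_1}$ is the union of its members. *)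

From mathcomp Require Import all_boot.
Set Implicit Arguments. Unset Strict Implicit. Unset Printing Implicit Defensive.

Section Ops.
Variables (U M : finType) (I : U -> M -> bool).

Definition up (O : {set U}) : {set M} := [set a | [forall x in O, I x a]].
Definition down (C : {set M}) : {set U} := [set x | [forall a in C, I x a]].
Definition box (O : {set U}) : {set M} := [set a | [forall x, I x a ==> (x \in O)]].
Definition dia (C : {set M}) : {set U} := [set x | [exists a in C, I x a]].

Definition is_concept (O : {set U}) (C : {set M}) : bool := (up O == C) && (down C == O).
Definition is_oo_concept (O : {set U}) (C : {set M}) : bool := (box O == C) && (dia C == O).

Definition ext_oo (O : {set U}) : bool := [exists C, is_oo_concept O C].

Definition canonical_ctx : Prop :=
  (forall x : U, up [set x] != set0 /\ up [set x] != setT) /\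
  (forall a : M, down [set a] != set0 /\ down [set a] != setT).
End Ops.

Definition rule (U M N : finType) : Type :=
  prod (prod {set U} {set M}) (prod {set U} {set N}).

Section Rules.
Variables (U M N : finType) (I : U -> M -> bool) (J : U -> N -> bool).

Definition is_Irule (r : rule U M N) : Prop :=
  let: ((X, C), (Y, D)) := r in
  is_oo_concept I X C /\ is_concept J Y D /\ X \subset Y /\ X != set0 /\ Y != setT.

Definition rule_implies (r1 r2 : rule U M N) : Prop :=
  let: ((X1, _), (Y1, _)) := r1 in
  let: ((X2, _), (Y2, _)) := r2 in
  X2 \subset X1 /\ X1 \subset Y1 /\ Y1 \subset Y2.

Definition necessary (r : rule U M N) : Prop :=
  is_Irule r /\
  ~ (exists r1, is_Irule r1 /\ r1 <> r /\ rule_implies r1 r).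

Definition R1 (O Y : {set U}) : bool :=
  [&& ext_oo I O, ext_oo I Y & up J O == up J Y].

Definition class_union (O : {set U}) : {set U} :=
  \bigcup_(Y | R1 O Y) Y.
End Rules.

From mathcomp Require Import all_boot.
Set Implicit Arguments. Unset Strict Implicit. Unset Printing Implicit Defensive.

(* Every I-rule ((X, X^box), (Y, Y^up)) is implied by the rule built from X:
   enlarging X to the union W of its R_1-class and shrinking Y to the closure
   X^{up down} keeps the rule valid, because up_N is constant on
   X <= W <= X^{up down} and unions of object-oriented extents are extents.
   Hence a necessary rule must coincide with the rule of its own antecedent;
   conversely, any rule implying the rule of O is squeezed between W and
   O^{up down}, which forces its antecedent into the class of O and so makes
   it equal to W. *)

Section Galois.
Variables (U M : finType) (I : U -> M -> bool).

Lemma up_antimono (A B : {set U}) : A \subset B -> up I B \subset up I A.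
Proof.
move=> sAB; apply/subsetP=> a; rewrite !inE => /forall_inP IBa.
by apply/forall_inP=> x /(subsetP sAB); apply: IBa.
Qed.

Lemma down_antimono (A B : {set M}) : A \subset B -> down I B \subset down I A.
Proof.
move=> sAB; apply/subsetP=> x; rewrite !inE => /forall_inP IxB.
by apply/forall_inP=> a /(subsetP sAB); apply: IxB.
Qed.

Lemma subset_down_up (A : {set U}) (B : {set M}) :
  (A \subset down I B) = (B \subset up I A).
Proof.
apply/subsetP/subsetP=> sub y.
- by rewrite inE => yB; apply/forall_inP=> x /sub; rewrite inE => /forall_inP->.
- by move=> yA; rewrite inE; apply/forall_inP=> a /sub; rewrite inE => /forall_inP->.
Qed.

Lemma sub_downup (A : {set U}) : A \subset down I (up I A).
Proof. by rewrite subset_down_up. Qed.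

Lemma up_sandwich (A B : {set U}) :
  A \subset B -> B \subset down I (up I A) -> up I B = up I A.
Proof.
move=> sAB sBA; apply/eqP; rewrite eqEsubset up_antimono //=.
by rewrite -subset_down_up.
Qed.

Lemma up_downup (A : {set U}) : up I (down I (up I A)) = up I A.
Proof. exact/up_sandwich/subxx/sub_downup. Qed.

Lemma box_mono (A B : {set U}) : A \subset B -> box I A \subset box I B.
Proof.
move=> sAB; apply/subsetP=> a; rewrite !inE => /forallP boxA.
by apply/forallP=> x; apply/implyP=> /(implyP (boxA x)) /(subsetP sAB).
Qed.

Lemma dia_mono (A B : {set M}) : A \subset B -> dia I A \subset dia I B.
Proof.
move=> sAB; apply/subsetP=> x; rewrite !inE => /exists_inP[a aA xa].
by apply/exists_inP; exists a; first exact: subsetP sAB a aA.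
Qed.

Lemma dia_box_sub (A : {set U}) : dia I (box I A) \subset A.
Proof.
apply/subsetP=> x; rewrite inE => /exists_inP[a]; rewrite inE => /forallP boxa.
exact: implyP (boxa x).
Qed.

Lemma ext_ooE (A : {set U}) : ext_oo I A = (dia I (box I A) == A).
Proof.
apply/existsP/eqP=> [[C /andP[/eqP <- /eqP //]] | diaA].
by exists (box I A); rewrite /is_oo_concept diaA !eqxx.
Qed.

Lemma oo_conceptE (A : {set U}) (C : {set M}) :
  is_oo_concept I A C = (C == box I A) && ext_oo I A.
Proof.
rewrite /is_oo_concept ext_ooE eq_sym.
by case: eqP => [<- | _].
Qed.

Lemma conceptE (A : {set U}) (B : {set M}) :
  is_concept I A B = (B == up I A) && (down I (up I A) == A).
Proof.
rewrite /is_concept eq_sym.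
by case: eqP => [<- | _].
Qed.

End Galois.

Section ClassRule.
Variables (U M N : finType) (I : U -> M -> bool) (J : U -> N -> bool).

Lemma class_union_sup (O Y : {set U}) : R1 I J O Y -> Y \subset class_union I J O.
Proof. exact: bigcup_sup. Qed.

Lemma sub_class_union (O : {set U}) : ext_oo I O -> O \subset class_union I J O.
Proof. by move=> eO; apply: class_union_sup; rewrite /R1 eO eqxx. Qed.

Lemma class_union_sub_downup (O : {set U}) :
  class_union I J O \subset down J (up J O).
Proof.
apply/bigcupsP=> Y /and3P[_ _ /eqP ->].
exact: sub_downup.
Qed.

Lemma ext_oo_class_union (O : {set U}) : ext_oo I (class_union I J O).
Proof.
rewrite ext_ooE eqEsubset dia_box_sub /=.
apply/bigcupsP=> Y RY; have /and3P[_ + _] := RY.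
rewrite ext_ooE => /eqP <-.
exact/dia_mono/box_mono/class_union_sup.
Qed.

Definition class_rule (O : {set U}) : rule U M N :=
  ((class_union I J O, box I (class_union I J O)), (down J (up J O), up J O)).

Lemma class_rule_Irule (O : {set U}) :
  ext_oo I O -> O != set0 -> down J (up J O) != setT -> is_Irule I J (class_rule O).
Proof.
move=> eO O0 OT; split; first by rewrite oo_conceptE eqxx ext_oo_class_union.
split; first by rewrite conceptE up_downup !eqxx.
split; first exact: class_union_sub_downup.
split=> //; apply: contraNneq O0 => W0.
by rewrite -subset0 -W0 sub_class_union.
Qed.

Lemma exists_class_rule_implies (r : rule U M N) :
  is_Irule I J r ->
  exists O, [/\ ext_oo I O, O != set0, down J (up J O) != setT &
                rule_implies (class_rule O) r].
Proof.
case: r => [[X C] [Y D]] [].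
rewrite oo_conceptE conceptE => /andP[_ eX] [/andP[_ /eqP closedY] [sXY [X0 YT]]].
have sclX : down J (up J X) \subset Y.
  by rewrite -closedY down_antimono ?up_antimono.
exists X; split=> //; first by apply: contraNneq YT => XT; rewrite eqEsubset subsetT -XT.
split; first exact: sub_class_union.
by split; first exact: class_union_sub_downup.
Qed.

Lemma implies_class_rule_eq (O : {set U}) (r : rule U M N) :
  ext_oo I O -> is_Irule I J r -> rule_implies r (class_rule O) -> r = class_rule O.
Proof.
case: r => [[X C] [Y D]] eO [].
rewrite oo_conceptE conceptE => /andP[/eqP -> eX] [/andP[/eqP -> /eqP closedY] _].
move=> [sWX [sXY sYO]].
have sOX : O \subset X := subset_trans (sub_class_union eO) sWX.
have upX : up J X = up J O := up_sandwich sOX (subset_trans sXY sYO).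
have upY : up J Y = up J O := up_sandwich (subset_trans sOX sXY) sYO.
have -> : X = class_union I J O.
  by apply/eqP; rewrite eqEsubset sWX class_union_sup // /R1 eO eX upX eqxx.
have -> : Y = down J (up J O) by rewrite -closedY upY.
by rewrite up_downup.
Qed.

Lemma necessary_eq (r r1 : rule U M N) :
  necessary I J r -> is_Irule I J r1 -> rule_implies r1 r -> r1 = r.
Proof.
move=> [_ nec] r1I imp; have [// | /eqP ne] := eqVneq r1 r.
by case: nec; exists r1.
Qed.

End ClassRule.

Theorem theorem3p5 (U M N : finType) (I : U -> M -> bool) (J : U -> N -> bool)
  (hU : 0 < #|U|) (hM : 0 < #|M|) (hN : 0 < #|N|)
  (hcanM : canonical_ctx I) (hcanN : canonical_ctx J)
  (r : rule U M N) :
  necessary I J r <->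
  exists O : {set U},
    [/\ ext_oo I O, O != set0, down J (up J O) != setT &
     r = ((class_union I J O, box I (class_union I J O)),
          (down J (up J O), up J O))].
Proof.
split=> [nec | [O [eO O0 OT ->]]].
- have [O [eO O0 OT imp]] := exists_class_rule_implies nec.1.
  by exists O; split=> //; rewrite -(necessary_eq nec (class_rule_Irule eO O0 OT) imp).
- split; first exact: class_rule_Irule.
  by case=> r1 [r1I [ne imp]]; apply/ne/implies_class_rule_eq.
Qed.
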